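(* Let $k\geq 1$ and let $\zeta_1,\dots,\zeta_k\in(0,1)$ be real numbers such that $1,\zeta_1,\dots,\zeta_k$ are linearly independent over $\mathbb{Q}$. For every integer $s\geq 2$, with $a_n^{i,(s)}$ and $b_n^{(s)}$ as in the context, $$\min_{1\le i\le k}\liminf_{n\to\infty}\left(\frac{a^{i,(s)}_{n+1}}{a^{i,(s)}_n}\right)^{1/k}\ \leq\ \limsup_{n\to\infty}\frac{b^{(s)}_{n+1}}{b^{(s)}_n}\ \leq\ \min_{1\le i\le k}\limsup_{n\to\infty}\frac{a^{i,(s)}_{n+1}}{a^{i,(s)}_n}.$$
   Context: For an integer $s\ge2$, let $a_1^{i,(s)}<a_2^{i,(s)}<\cdots$ be the positions (after the point) of the nonzero digits in the base-$s$ expansion of $\zeta_i$, i.e. $\zeta_i=\sum_{n\ge1}\alpha_{n,i}s^{-a_n^{i,(s)}}$ with digits $0<\alpha_{n,i}\le s-1$. Let $(b_n^{(s)})_{n\ge1}$ be the increasing enumeration of the set $\{a_n^{i,(s)}:1\le i\le k,\ n\ge1\}$. *)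

From HB Require Import structures.
From mathcomp Require Import all_boot all_order all_algebra.
From mathcomp Require Import all_classical all_reals all_analysis.
Set Implicit Arguments. Unset Strict Implicit. Unset Printing Implicit Defensive.
Import Order.TTheory GRing.Theory Num.Theory.
Local Open Scope ring_scope.

(* The m-th digit after the point of the base-s expansion of x in (0,1):
   floor(x * s^m) mod s.  For irrational x this is the unique expansion. *)
Definition digit {R : realType} (s : nat) (x : R) (m : nat) : int :=
  (Num.floor (x * (s%:R) ^+ m) %% (s%:Z))%Z.

Definition nz_pos {R : realType} (s : nat) (x : R) : set nat :=
  [set m | (0 < m)%N /\ digit s x m != 0].

Definition increasing_enum (u : nat -> nat) (A : set nat) : Prop :=
  (forall n, (u n < u n.+1)%N) /\ range u = A.

Definition Q_lin_indep1 {R : realType} (k : nat) (z : 'I_k -> R) : Prop :=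
  forall (q0 : rat) (q : 'I_k -> rat),
    ratr q0 + \sum_(i < k) ratr (q i) * z i = 0 -> q0 = 0 /\ forall i, q i = 0.

Definition ratio_seq {R : realType} (u : nat -> nat) : nat -> \bar R :=
  fun n => ((u n.+1)%:R / (u n)%:R : R)%:E.

From HB Require Import structures.
From mathcomp Require Import all_boot all_order all_algebra.
From mathcomp Require Import all_classical all_reals all_analysis.
From mathcomp Require Import lra zify.
Import Order.TTheory GRing.Theory Num.Theory.
Local Open Scope ring_scope.
Local Open Scope classical_set_scope.

(* If a_m <= b_n < b_{n+1} <= a_{m+1} with a one of the enumerated sets, the
   ratio b_{n+1}/b_n is at most a_{m+1}/a_m, and m grows with n: this gives the
   upper bound.  Conversely, if b_{n+1} < e b_n eventually, then b_{n+k} < e^k b_n,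
   and two of the k+1 terms b_n, ..., b_{n+k} lie in the same set, so that set has
   a ratio a_{m+1}/a_m <= e^k with a_m >= b_n; one set does so infinitely often,
   whence its liminf is at most e^k. *)

Section ExtendedRealLimits.
Variable R : realType.
Local Open Scope ereal_scope.
Implicit Types (u v : nat -> \bar R) (x y c : \bar R).

Lemma limn_esup_lt_eventually u c :
  limn_esup u < c -> exists N, forall n, (N <= n)%N -> u n < c.
Proof.
rewrite /limn_esup /limf_esup => /ereal_inf_lt [_ [V [N _ hN] <-]] supVc.
exists N => n Nn; apply: le_lt_trans supVc.
by apply: ereal_sup_ubound; exists n => //; apply: hN.
Qed.

Lemma limn_esup_le u c N : (forall n, (N <= n)%N -> u n <= c) -> limn_esup u <= c.
Proof.
move=> uc; apply: ge_ereal_inf; exists (ereal_sup (u @` [set n | (N <= n)%N])).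
  by exists [set n | (N <= n)%N] => //; exists N.
by apply: ge_ereal_sup => _ [n Nn <-]; apply: uc.
Qed.

Lemma limn_esup_le_cofinal u v :
  (forall M, exists N, forall n, (N <= n)%N -> exists2 m, (M <= m)%N & u n <= v m) ->
  limn_esup u <= limn_esup v.
Proof.
move=> uv; apply: le_ereal_inf_tmp => _ [V [M _ hM] <-].
have [N hN] := uv M; apply: ge_ereal_inf.
exists (ereal_sup (u @` [set n | (N <= n)%N])).
  by exists [set n | (N <= n)%N] => //; exists N.
apply: ge_ereal_sup => _ [n Nn <-]; have [m Mm unvm] := hN n Nn.
by apply: le_trans unvm _; apply: ereal_sup_ubound; exists m => //; apply: hM.
Qed.

Lemma limn_einf_le_frequently u c :
  (forall M, exists2 m, (M <= m)%N & u m <= c) -> limn_einf u <= c.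
Proof.
move=> uc; rewrite /limn_einf leeNl; apply: le_ereal_inf_tmp => _ [V [M _ hM] <-].
have [m Mm umc] := uc M; apply: le_trans (_ : - u m <= _); first by rewrite leeN2.
by apply: ereal_sup_ubound; exists m => //; apply: hM.
Qed.

Lemma limn_einf_ge0 u : (forall n, 0 <= u n) -> 0 <= limn_einf u.
Proof.
move=> u_ge0; rewrite /limn_einf leeNr oppe0; apply: (@limn_esup_le _ _ 0%N) => n _.
by rewrite /= leeNl oppe0.
Qed.

Lemma lee_gtEFin x y : (forall e : R, x < e%:E -> y <= e%:E) -> y <= x.
Proof.
case: x => [r| |] yx; last 2 first.
- exact: leey.
- by rewrite (eq_ninfty (fun r => yx r (ltNyr r))).
apply/lee_addgt0Pr => e e0; apply: yx; rewrite lte_fin; lra.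
Qed.

End ExtendedRealLimits.

Lemma poweR_exprn_inv {R : realType} {e : R} {n : nat} :
  0 <= e -> (0 < n)%N -> poweR ((e ^+ n)%:E) n%:R^-1 = e%:E.
Proof.
move=> e0 n0; rewrite poweR_EFin -powR_mulrn // -powRrM mulfV ?powRr1 //.
by rewrite pnatr_eq0 -lt0n.
Qed.

Section StrictlyIncreasing.
Variable u : nat -> nat.
Hypothesis u_incr : forall n, (u n < u n.+1)%N.

Lemma incr_leE : {mono u : m n / (m <= n)%N}.
Proof. exact/leq_mono/(homo_ltn ltn_trans). Qed.

Lemma incr_ltE : {mono u : m n / (m < n)%N}.
Proof. exact/leqW_mono/incr_leE. Qed.

Lemma incr_geq n : (n <= u n)%N.
Proof. by elim: n => // n IHn; apply: leq_ltn_trans IHn (u_incr n). Qed.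

Lemma incr_bracket x : (u 0 <= x)%N -> exists m, (u m <= x < u m.+1)%N.
Proof.
move=> u0x; have ux_le m : (u m <= x)%N -> (m <= x)%N.
  by move=> umx; apply: leq_trans (incr_geq m) umx.
have u0x' : exists m, (u m <= x)%N by exists 0%N.
case: (ex_maxnP u0x' ux_le) => m umx m_max.
by exists m; rewrite umx ltnNge; apply/negP => /m_max; rewrite ltnn.
Qed.

End StrictlyIncreasing.
Arguments incr_leE {u} u_incr.
Arguments incr_ltE {u} u_incr.
Arguments incr_geq {u} u_incr.
Arguments incr_bracket {u} u_incr.

Lemma frequently_finite_union (I : finType) (P : I -> nat -> Prop) (f : I -> nat -> nat)
    (f_incr : forall i n, (f i n < f i n.+1)%N) N :
  (forall n, (N <= n)%N -> exists i m, (n <= f i m)%N /\ P i m) ->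
  exists i, forall M, exists2 m, (M <= m)%N & P i m.
Proof.
move=> fP; apply: contrapT => no_i.
have bounded i : exists M, forall m, (M <= m)%N -> ~ P i m.
  apply: contrapT => Pi; apply: no_i; exists i => M.
  by apply: contrapT => notPM; apply: Pi; exists M => m Mm Pim; apply: notPM; exists m.
have [M M_bound] := boolp.choice bounded.
have [i [m [fim Pim]]] := fP (N + \max_i f i (M i))%N (leq_addr _ _).
apply: M_bound Pim; rewrite -(incr_leE (f_incr i)).
apply: leq_trans (@leq_bigmax _ (fun i => f i (M i)) i) _.
exact: leq_trans (leq_addl _ _) fim.
Qed.

Section IncreasingEnum.
Variables (u : nat -> nat) (A : set nat).
Hypothesis uA : increasing_enum u A.

Lemma increasing_enum_mem n : A (u n).
Proof. by rewrite -(proj2 uA); exists n. Qed.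

Lemma increasing_enumP x : A x -> exists n, u n = x.
Proof. by rewrite -(proj2 uA) => -[n _ <-]; exists n. Qed.

Lemma increasing_enum_gt0 : (forall x, A x -> (0 < x)%N) -> forall n, (0 < u n)%N.
Proof. by move=> A_gt0 n; apply/A_gt0/increasing_enum_mem. Qed.

End IncreasingEnum.
Arguments increasing_enum_mem {u A} uA n.
Arguments increasing_enumP {u A} uA {x} Ax.
Arguments increasing_enum_gt0 {u A} uA A_gt0 n.

Section EnumerationOfUnion.
Variables (I : finType) (A : I -> set nat) (a : I -> nat -> nat) (b : nat -> nat).
Hypothesis ha : forall i, increasing_enum (a i) (A i).
Hypothesis hb : increasing_enum b (\bigcup_(i in [set: I]) A i).

Lemma union_enum_mem n : exists i, A i (b n).
Proof. by have [i _ Abn] := increasing_enum_mem hb n; exists i. Qed.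

Lemma union_enum_between i M : exists N, forall n, (N <= n)%N ->
  exists2 m, (M <= m)%N & (a i m <= b n)%N /\ (b n.+1 <= a i m.+1)%N.
Proof.
have [ai_incr b_incr] := (proj1 (ha i), proj1 hb).
exists (a i M) => n Mn; have b_geq := incr_geq b_incr n.
have a0b : (a i 0 <= b n)%N.
  by apply: leq_trans (leq_trans Mn b_geq); rewrite (incr_leE ai_incr).
have [m /andP[amb bam]] := incr_bracket ai_incr _ a0b.
exists m; last split => //.
  rewrite leqNgt; apply/negP => mM.
  have : (a i m.+1 <= a i M)%N by rewrite (incr_leE ai_incr).
  by move: Mn b_geq bam; lia.
have [j bj] : exists j, b j = a i m.+1.
  by apply: (increasing_enumP hb); exists i => //; apply: increasing_enum_mem (ha i) _.
by move: bam; rewrite -bj (incr_ltE b_incr) (incr_leE b_incr).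
Qed.

Lemma union_enum_pigeonhole n : exists i p q,
  [/\ (n <= p < q)%N, (q <= n + #|I|)%N, A i (b p) & A i (b q)].
Proof.
have [g hg] := boolp.choice (fun j : 'I_#|I|.+1 => union_enum_mem (n + j)%N).
have : ~~ injectiveb g.
  by apply/negP => /injectiveP /leq_card; rewrite card_ord ltnn.
case/injectivePn => j1 [j2 j12 gj12].
have [hj1 hj2] := (ltn_ord j1, ltn_ord j2).
case: (ltngtP j1 j2) => [j1j2|j2j1|/val_inj j1j2]; last by rewrite j1j2 eqxx in j12.
- exists (g j1), (n + j1)%N, (n + j2)%N; split; [lia | lia | exact: hg | rewrite gj12; exact: hg].
- exists (g j1), (n + j2)%N, (n + j1)%N; split; [lia | lia | rewrite gj12; exact: hg | exact: hg].
Qed.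

End EnumerationOfUnion.
Arguments union_enum_between {I A a b} ha hb i M.
Arguments union_enum_pigeonhole {I A b} hb n.

Lemma ler_ratio_nat (R : numFieldType) (p q r t : nat) :
  (0 < r)%N -> (p <= q)%N -> (r <= t)%N -> (p%:R / t%:R : R) <= q%:R / r%:R.
Proof.
move=> r0 pq rt; have t0 : (0 < t)%N by apply: leq_trans rt.
rewrite ler_pdivrMr ?ltr0n // mulrAC ler_pdivlMr ?ltr0n //.
by rewrite -!natrM ler_nat leq_mul.
Qed.

Lemma ratio_seq_ge0 (R : realType) (u : nat -> nat) n : (0 <= ratio_seq (R:=R) u n)%E.
Proof. by rewrite lee_fin divr_ge0. Qed.

Lemma geometric_growth (R : realFieldType) (u : nat -> nat) (e : R) N :
  0 <= e -> (forall n, (N <= n)%N -> (u n.+1)%:R <= e * (u n)%:R) ->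
  forall n j, (N <= n)%N -> (u (n + j)%N)%:R <= e ^+ j * (u n)%:R.
Proof.
move=> e0 u_step n j Nn; elim: j => [|j IHj]; first by rewrite addn0 mul1r.
rewrite addnS exprS -mulrA; apply: le_trans (u_step _ _) _.
  exact: leq_trans Nn (leq_addr _ _).
exact: ler_wpM2l.
Qed.

Section RatioBounds.
Variable R : realType.
Variables (I : finType) (A : I -> set nat) (a : I -> nat -> nat) (b : nat -> nat).
Hypothesis ha : forall i, increasing_enum (a i) (A i).
Hypothesis hb : increasing_enum b (\bigcup_(i in [set: I]) A i).
Hypothesis A_gt0 : forall i x, A i x -> (0 < x)%N.
Local Open Scope ereal_scope.

Let a_gt0 i : forall m, (0 < a i m)%N.
Proof. exact: increasing_enum_gt0 (ha i) (A_gt0 i). Qed.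

Let b_gt0 : forall n, (0 < b n)%N.
Proof. by apply: (increasing_enum_gt0 hb) => x [i _ /A_gt0]. Qed.

Lemma limn_esup_ratio_union_le i :
  limn_esup (ratio_seq (R:=R) b) <= limn_esup (ratio_seq (R:=R) (a i)).
Proof.
apply: limn_esup_le_cofinal => M; have [N hN] := union_enum_between ha hb i M.
exists N => n Nn; have [m Mm [amb bam]] := hN n Nn.
by exists m => //; rewrite lee_fin; apply: ler_ratio_nat.
Qed.

Lemma limn_einf_ratio_le_pow (e : R) :
  limn_esup (ratio_seq (R:=R) b) < e%:E ->
  (0 <= e)%R /\ exists i, limn_einf (ratio_seq (R:=R) (a i)) <= (e ^+ #|I|)%:E.
Proof.
move=> /limn_esup_lt_eventually [N b_step].
have e0 : (0 <= e)%R.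
  by rewrite -lee_fin; apply: le_trans (ltW (b_step N (leqnn N))); apply: ratio_seq_ge0.
have b_window n : (N <= n)%N -> ((b (n + #|I|)%N)%:R <= e ^+ #|I| * (b n)%:R)%R.
  apply: geometric_growth => // m Nm; apply/ltW.
  by rewrite -ltr_pdivrMr ?ltr0n // -lte_fin b_step.
split => //.
have [b_incr ai_incr] := (proj1 hb, fun i => proj1 (ha i)).
suff [i freq] : exists i, forall M, exists2 m, (M <= m)%N &
    ratio_seq (R:=R) (a i) m <= (e ^+ #|I|)%:E.
  by exists i; apply: limn_einf_le_frequently.
apply: (@frequently_finite_union _ _ _ ai_incr N) => n Nn.
have [i [p [q [/andP[np pq] qn Abp Abq]]]] := union_enum_pigeonhole hb n.
have [[m am] [m' am']] := (increasing_enumP (ha i) Abp, increasing_enumP (ha i) Abq).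
have mm' : (m < m')%N by rewrite -(incr_ltE (ai_incr i)) am am' (incr_ltE b_incr).
exists i, m; split; first by rewrite am; apply: leq_trans np (incr_geq b_incr p).
rewrite lee_fin; apply: (@le_trans _ _ ((b q)%:R / (b p)%:R)%R).
  by apply: ler_ratio_nat; rewrite -?am' ?am ?(incr_leE (ai_incr i)).
apply: (@le_trans _ _ ((b (n + #|I|)%N)%:R / (b n)%:R)%R).
  by apply: ler_ratio_nat; rewrite ?(incr_leE b_incr) // (ltnW pq).
by rewrite ler_pdivrMr ?ltr0n // b_window.
Qed.

End RatioBounds.
Arguments limn_esup_ratio_union_le {R I A a b} ha hb A_gt0 i.
Arguments limn_einf_ratio_le_pow {R I A a b} ha hb A_gt0 {e}.

Theorem lemma2p4 (R : realType) (k : nat) (zeta : 'I_k -> R)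
  (hk : (1 <= k)%N)
  (hz : forall i, 0 < zeta i < 1)
  (hind : Q_lin_indep1 zeta)
  (s : nat) (hs : (2 <= s)%N)
  (a : 'I_k -> nat -> nat) (b : nat -> nat)
  (ha : forall i, increasing_enum (a i) (nz_pos s (zeta i)))
  (hb : increasing_enum b (\bigcup_(i in [set: 'I_k]) nz_pos s (zeta i))) :
  ((\big[Order.min/+oo%E]_(i < k)
      poweR (limn_einf (ratio_seq (R:=R) (a i))) (k%:R^-1) <= limn_esup (ratio_seq (R:=R) b))%E
  /\ (limn_esup (ratio_seq (R:=R) b) <=
      \big[Order.min/+oo%E]_(i < k) limn_esup (ratio_seq (R:=R) (a i)))%E).
Proof.
have pos_gt0 i x : nz_pos s (zeta i) x -> (0 < x)%N by case.
split; last first.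
  apply: le_bigmin => [|i _]; first exact: leey.
  exact: limn_esup_ratio_union_le ha hb pos_gt0 i.
apply: lee_gtEFin => e /(limn_einf_ratio_le_pow ha hb pos_gt0) [e0 [i le_pow]].
rewrite card_ord in le_pow; apply: le_trans (bigmin_le _ i _) _.
rewrite -(poweR_exprn_inv e0 hk); apply: (gt0_ler_poweR _); last exact: le_pow.
- by rewrite invr_ge0.
- by rewrite in_itv /= leey andbT; apply/limn_einf_ge0/ratio_seq_ge0.
- by rewrite in_itv /= leey andbT lee_fin exprn_ge0.
Qed.
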